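(* Let $C$ be a globularily generated double category and $\Phi$ a 2-morphism of $C$. If $\Phi$ is not globular, then $\Phi$ is a horizontal endomorphism, i.e. $s\Phi=t\Phi$.
   Context: Double categories are not assumed strict: $C_0$ (objects and vertical morphisms), $C_1$ (horizontal morphisms and 2-morphisms, with vertical composition), source and target functors $s,t:C_1\to C_0$, horizontal identity $i:C_0\to C_1$, horizontal composition $\ast$, and unitor and associator natural isomorphisms whose components are globular. A 2-morphism $\Phi$ is globular if $s\Phi$ and $t\Phi$ are identity vertical morphisms. $C$ is globularily generated if the smallest sub-double category of $C$ (subcategories of $C_0$, $C_1$ closed under $s,t,i,\ast$ and the constraints) containing all objects, vertical morphisms, horizontal morphisms and globular 2-morphisms of $C$ is $C$ itself. *)

(* Categories, functors and (weak / pseudo) double categories are encoded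
   in a non-dependent "total operations with source/target maps" style:
   compositions are total functions, and all laws are guarded by
   composability hypotheses. *)

(* A category: objects, morphisms, domain/codomain, identities, composition.
   [comp g f] is "g after f", meaningful when [cod f = dom g]. *)
Record Cat : Type := {
  ob : Type;
  mor : Type;
  dom : mor -> ob;
  cod : mor -> ob;
  idm : ob -> mor;
  comp : mor -> mor -> mor;
  dom_idm : forall x, dom (idm x) = x;
  cod_idm : forall x, cod (idm x) = x;
  dom_comp : forall f g, cod f = dom g -> dom (comp g f) = dom f;
  cod_comp : forall f g, cod f = dom g -> cod (comp g f) = cod g;
  comp_idl : forall f, comp (idm (cod f)) f = f;
  comp_idr : forall f, comp f (idm (dom f)) = f;
  comp_assoc : forall f g h, cod f = dom g -> cod g = dom h ->
      comp h (comp g f) = comp (comp h g) f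
}.

Record Functor (C D : Cat) : Type := {
  fob : ob C -> ob D;
  fmor : mor C -> mor D;
  f_dom : forall f, dom D (fmor f) = fob (dom C f);
  f_cod : forall f, cod D (fmor f) = fob (cod C f);
  f_idm : forall x, fmor (idm C x) = idm D (fob x);
  f_comp : forall f g, cod C f = dom C g ->
      fmor (comp C g f) = comp D (fmor g) (fmor f)
}.
Arguments fob {C D} _ _.
Arguments fmor {C D} _ _.

Definition globular_wrt {C0 C1 : Cat} (s t : Functor C1 C0) (Phi : mor C1) : Prop :=
  fmor s Phi = idm C0 (fob s (dom C1 Phi)) /\
  fmor t Phi = idm C0 (fob t (dom C1 Phi)).

(* C0 : objects and vertical morphisms.
   C1 : horizontal morphisms (as objects) and 2-morphisms (as morphisms),
        composition in C1 = vertical composition of 2-morphisms.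
   src, tgt : C1 -> C0, hid : C0 -> C1 the horizontal identity.
   Horizontal composition [hcomp M N] is defined when [tgt M = src N]
   (diagrammatic order: first M then N). *)
Record DoubleCat : Type := {
  C0 : Cat;
  C1 : Cat;
  src : Functor C1 C0;
  tgt : Functor C1 C0;
  hid : Functor C0 C1;
  src_hid_ob : forall x, fob src (fob hid x) = x;
  src_hid_mor : forall f, fmor src (fmor hid f) = f;
  tgt_hid_ob : forall x, fob tgt (fob hid x) = x;
  tgt_hid_mor : forall f, fmor tgt (fmor hid f) = f;

  hcomp_ob : ob C1 -> ob C1 -> ob C1;
  hcomp_mor : mor C1 -> mor C1 -> mor C1;
  src_hcomp_ob : forall M N, fob tgt M = fob src N ->
      fob src (hcomp_ob M N) = fob src M;
  tgt_hcomp_ob : forall M N, fob tgt M = fob src N ->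
      fob tgt (hcomp_ob M N) = fob tgt N;
  src_hcomp_mor : forall P Q, fmor tgt P = fmor src Q ->
      fmor src (hcomp_mor P Q) = fmor src P;
  tgt_hcomp_mor : forall P Q, fmor tgt P = fmor src Q ->
      fmor tgt (hcomp_mor P Q) = fmor tgt Q;
  dom_hcomp : forall P Q, fmor tgt P = fmor src Q ->
      dom C1 (hcomp_mor P Q) = hcomp_ob (dom C1 P) (dom C1 Q);
  cod_hcomp : forall P Q, fmor tgt P = fmor src Q ->
      cod C1 (hcomp_mor P Q) = hcomp_ob (cod C1 P) (cod C1 Q);
  hcomp_idm : forall M N, fob tgt M = fob src N ->
      hcomp_mor (idm C1 M) (idm C1 N) = idm C1 (hcomp_ob M N);
  hcomp_comp : forall P P' Q Q',
      fmor tgt P = fmor src Q -> fmor tgt P' = fmor src Q' ->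
      cod C1 P = dom C1 P' -> cod C1 Q = dom C1 Q' ->
      hcomp_mor (comp C1 P' P) (comp C1 Q' Q)
      = comp C1 (hcomp_mor P' Q') (hcomp_mor P Q);

  lu : ob C1 -> mor C1;
  lu_inv : ob C1 -> mor C1;
  lu_dom : forall M, dom C1 (lu M) = hcomp_ob (fob hid (fob src M)) M;
  lu_cod : forall M, cod C1 (lu M) = M;
  lu_inv_dom : forall M, dom C1 (lu_inv M) = M;
  lu_inv_cod : forall M, cod C1 (lu_inv M) = hcomp_ob (fob hid (fob src M)) M;
  lu_linv : forall M, comp C1 (lu_inv M) (lu M)
                      = idm C1 (hcomp_ob (fob hid (fob src M)) M);
  lu_rinv : forall M, comp C1 (lu M) (lu_inv M) = idm C1 M;
  lu_glob : forall M, globular_wrt src tgt (lu M);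
  lu_nat : forall P,
      comp C1 (lu (cod C1 P)) (hcomp_mor (fmor hid (fmor src P)) P)
      = comp C1 P (lu (dom C1 P));

  ru : ob C1 -> mor C1;
  ru_inv : ob C1 -> mor C1;
  ru_dom : forall M, dom C1 (ru M) = hcomp_ob M (fob hid (fob tgt M));
  ru_cod : forall M, cod C1 (ru M) = M;
  ru_inv_dom : forall M, dom C1 (ru_inv M) = M;
  ru_inv_cod : forall M, cod C1 (ru_inv M) = hcomp_ob M (fob hid (fob tgt M));
  ru_linv : forall M, comp C1 (ru_inv M) (ru M)
                      = idm C1 (hcomp_ob M (fob hid (fob tgt M)));
  ru_rinv : forall M, comp C1 (ru M) (ru_inv M) = idm C1 M;
  ru_glob : forall M, globular_wrt src tgt (ru M);
  ru_nat : forall P,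
      comp C1 (ru (cod C1 P)) (hcomp_mor P (fmor hid (fmor tgt P)))
      = comp C1 P (ru (dom C1 P));

  asc : ob C1 -> ob C1 -> ob C1 -> mor C1;
  asc_inv : ob C1 -> ob C1 -> ob C1 -> mor C1;
  asc_dom : forall M N K, fob tgt M = fob src N -> fob tgt N = fob src K ->
      dom C1 (asc M N K) = hcomp_ob (hcomp_ob M N) K;
  asc_cod : forall M N K, fob tgt M = fob src N -> fob tgt N = fob src K ->
      cod C1 (asc M N K) = hcomp_ob M (hcomp_ob N K);
  asc_inv_dom : forall M N K, fob tgt M = fob src N -> fob tgt N = fob src K ->
      dom C1 (asc_inv M N K) = hcomp_ob M (hcomp_ob N K);
  asc_inv_cod : forall M N K, fob tgt M = fob src N -> fob tgt N = fob src K ->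
      cod C1 (asc_inv M N K) = hcomp_ob (hcomp_ob M N) K;
  asc_linv : forall M N K, fob tgt M = fob src N -> fob tgt N = fob src K ->
      comp C1 (asc_inv M N K) (asc M N K) = idm C1 (hcomp_ob (hcomp_ob M N) K);
  asc_rinv : forall M N K, fob tgt M = fob src N -> fob tgt N = fob src K ->
      comp C1 (asc M N K) (asc_inv M N K) = idm C1 (hcomp_ob M (hcomp_ob N K));
  asc_glob : forall M N K, fob tgt M = fob src N -> fob tgt N = fob src K ->
      globular_wrt src tgt (asc M N K);
  asc_nat : forall P Q R, fmor tgt P = fmor src Q -> fmor tgt Q = fmor src R ->
      comp C1 (asc (cod C1 P) (cod C1 Q) (cod C1 R)) (hcomp_mor (hcomp_mor P Q) R)
      = comp C1 (hcomp_mor P (hcomp_mor Q R)) (asc (dom C1 P) (dom C1 Q) (dom C1 R));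

  triangle : forall M N, fob tgt M = fob src N ->
      comp C1 (hcomp_mor (idm C1 M) (lu N)) (asc M (fob hid (fob tgt M)) N)
      = hcomp_mor (ru M) (idm C1 N);
  pentagon : forall M N K L,
      fob tgt M = fob src N -> fob tgt N = fob src K -> fob tgt K = fob src L ->
      comp C1 (asc M N (hcomp_ob K L)) (asc (hcomp_ob M N) K L)
      = comp C1 (hcomp_mor (idm C1 M) (asc N K L))
          (comp C1 (asc M (hcomp_ob N K) L)
                   (hcomp_mor (asc M N K) (idm C1 L)))
}.

Definition globular (D : DoubleCat) (Phi : mor (C1 D)) : Prop :=
  globular_wrt (src D) (tgt D) Phi.

Record SubDouble (D : DoubleCat) : Type := {
  O0 : ob (C0 D) -> Prop;
  M0 : mor (C0 D) -> Prop;
  O1 : ob (C1 D) -> Prop;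
  M1 : mor (C1 D) -> Prop;
  M0_dom : forall f, M0 f -> O0 (dom (C0 D) f);
  M0_cod : forall f, M0 f -> O0 (cod (C0 D) f);
  M0_idm : forall x, O0 x -> M0 (idm (C0 D) x);
  M0_comp : forall f g, M0 f -> M0 g -> cod (C0 D) f = dom (C0 D) g ->
      M0 (comp (C0 D) g f);
  M1_dom : forall f, M1 f -> O1 (dom (C1 D) f);
  M1_cod : forall f, M1 f -> O1 (cod (C1 D) f);
  M1_idm : forall x, O1 x -> M1 (idm (C1 D) x);
  M1_comp : forall f g, M1 f -> M1 g -> cod (C1 D) f = dom (C1 D) g ->
      M1 (comp (C1 D) g f);
  O_src : forall M, O1 M -> O0 (fob (src D) M);
  O_tgt : forall M, O1 M -> O0 (fob (tgt D) M);
  M_src : forall P, M1 P -> M0 (fmor (src D) P);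
  M_tgt : forall P, M1 P -> M0 (fmor (tgt D) P);
  O_hid : forall x, O0 x -> O1 (fob (hid D) x);
  M_hid : forall f, M0 f -> M1 (fmor (hid D) f);
  O_hcomp : forall M N, O1 M -> O1 N -> fob (tgt D) M = fob (src D) N ->
      O1 (hcomp_ob D M N);
  M_hcomp : forall P Q, M1 P -> M1 Q -> fmor (tgt D) P = fmor (src D) Q ->
      M1 (hcomp_mor D P Q);
  M_lu : forall M, O1 M -> M1 (lu D M);
  M_lu_inv : forall M, O1 M -> M1 (lu_inv D M);
  M_ru : forall M, O1 M -> M1 (ru D M);
  M_ru_inv : forall M, O1 M -> M1 (ru_inv D M);
  M_asc : forall M N K, O1 M -> O1 N -> O1 K ->
      fob (tgt D) M = fob (src D) N -> fob (tgt D) N = fob (src D) K ->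
      M1 (asc D M N K);
  M_asc_inv : forall M N K, O1 M -> O1 N -> O1 K ->
      fob (tgt D) M = fob (src D) N -> fob (tgt D) N = fob (src D) K ->
      M1 (asc_inv D M N K)
}.
Arguments O0 {D} _ _.
Arguments M0 {D} _ _.
Arguments O1 {D} _ _.
Arguments M1 {D} _ _.

(* D is globularily generated: the smallest sub-double category containing
   all objects, vertical morphisms, horizontal morphisms and globular
   2-morphisms is D itself, i.e. every such sub-double category is all of D. *)
Definition globularly_generated (D : DoubleCat) : Prop :=
  forall S : SubDouble D,
    (forall x, O0 S x) -> (forall f, M0 S f) -> (forall M, O1 S M) ->
    (forall Phi, globular D Phi -> M1 S Phi) ->
    (forall x, O0 S x) /\ (forall f, M0 S f) /\ (forall M, O1 S M) /\
    (forall Phi, M1 S Phi).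

(* The 2-morphisms that are globular or horizontal endomorphisms (s = t) form
   a sub-double category: it contains the horizontal identities (s i = t i),
   the constraints and their inverses (globular), is closed under vertical
   composition (an identity factor leaves the other one unchanged under s and
   t) and under horizontal composition (s (P * Q) = s P and t (P * Q) = t Q,
   and the composability condition t P = s Q links the two). Since it contains
   every globular 2-morphism, in a globularily generated double category it is
   everything. *)
From Stdlib Require Import Setoid.

Section IdentityMorphisms.
Variable C : Cat.

Definition is_idm (f : mor C) : Prop := f = idm C (dom C f).

Lemma is_idm_idm x : is_idm (idm C x).
Proof. unfold is_idm. now rewrite dom_idm. Qed.

Lemma comp_is_idm_l f g : is_idm g -> cod C f = dom C g -> comp C g f = f.
Proof. unfold is_idm. intros Hg Hfg. rewrite Hg, <- Hfg. apply comp_idl. Qed.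

Lemma comp_is_idm_r f g : is_idm f -> cod C f = dom C g -> comp C g f = g.
Proof.
  unfold is_idm. intros Hf Hfg.
  assert (Hcod : cod C f = dom C f) by (rewrite Hf; now rewrite cod_idm, dom_idm).
  rewrite Hf, <- Hcod, Hfg. apply comp_idr.
Qed.

Lemma is_idm_of_comp f g :
  is_idm g -> cod C f = dom C g -> is_idm (comp C g f) -> is_idm f.
Proof. intros Hg Hfg. now rewrite comp_is_idm_l. Qed.

End IdentityMorphisms.

Lemma fmor_composable (C D : Cat) (F : Functor C D) f g :
  cod C f = dom C g -> cod D (fmor F f) = dom D (fmor F g).
Proof. intro Hfg. now rewrite f_cod, f_dom, Hfg. Qed.

Lemma fmor_is_idm (C D : Cat) (F : Functor C D) f :
  is_idm C f -> is_idm D (fmor F f).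
Proof. unfold is_idm. intro Hf. rewrite Hf. now rewrite f_idm, dom_idm. Qed.

Section GlobularOrEndo.
Variable D : DoubleCat.

Lemma globularE P :
  globular D P <-> is_idm _ (fmor (src D) P) /\ is_idm _ (fmor (tgt D) P).
Proof. unfold globular, globular_wrt, is_idm. now rewrite !f_dom. Qed.

Lemma globular_idm M : globular D (idm (C1 D) M).
Proof. apply globularE. split; apply fmor_is_idm, is_idm_idm. Qed.

Lemma globular_of_section f g M :
  globular D g -> cod (C1 D) f = dom (C1 D) g ->
  comp (C1 D) g f = idm (C1 D) M -> globular D f.
Proof.
  intros [Hs Ht]%globularE Hfg Hgf. apply globularE.
  split; eapply is_idm_of_comp; try eapply fmor_composable; try eassumption;
    rewrite <- f_comp, Hgf by exact Hfg; apply fmor_is_idm, is_idm_idm.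
Qed.

Definition glob_or_endo P : Prop :=
  globular D P \/ fmor (src D) P = fmor (tgt D) P.

Lemma glob_or_endo_comp f g :
  glob_or_endo f -> glob_or_endo g -> cod (C1 D) f = dom (C1 D) g ->
  glob_or_endo (comp (C1 D) g f).
Proof.
  intros Hf Hg Hfg. unfold glob_or_endo. rewrite globularE, !f_comp by exact Hfg.
  pose proof (fmor_composable _ _ (src D) _ _ Hfg) as Hs.
  pose proof (fmor_composable _ _ (tgt D) _ _ Hfg) as Ht.
  destruct Hf as [[Fs Ft]%globularE | Ef], Hg as [[Gs Gt]%globularE | Eg].
  - left. rewrite (comp_is_idm_l _ _ _ Gs Hs), (comp_is_idm_l _ _ _ Gt Ht). auto.
  - right. now rewrite (comp_is_idm_r _ _ _ Fs Hs), (comp_is_idm_r _ _ _ Ft Ht).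
  - right. now rewrite (comp_is_idm_l _ _ _ Gs Hs), (comp_is_idm_l _ _ _ Gt Ht).
  - right. now rewrite Ef, Eg.
Qed.

Lemma glob_or_endo_hid f : glob_or_endo (fmor (hid D) f).
Proof. right. now rewrite src_hid_mor, tgt_hid_mor. Qed.

Lemma glob_or_endo_hcomp P Q :
  glob_or_endo P -> glob_or_endo Q -> fmor (tgt D) P = fmor (src D) Q ->
  glob_or_endo (hcomp_mor D P Q).
Proof.
  intros HP HQ HPQ. unfold glob_or_endo.
  rewrite globularE, src_hcomp_mor, tgt_hcomp_mor by exact HPQ.
  destruct HP as [[Ps Pt]%globularE | EP], HQ as [[Qs Qt]%globularE | EQ].
  - left. auto.
  - left. rewrite <- EQ, <- HPQ. auto.
  - left. rewrite EP, HPQ. auto.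
  - right. now rewrite EP, HPQ, EQ.
Qed.

Definition glob_or_endo_sub : SubDouble D.
Proof.
  refine (Build_SubDouble D (fun _ => True) (fun _ => True) (fun _ => True)
    glob_or_endo _ _ _ _ _ _ _ _ _ _ _ _ _ _ _ _ _ _ _ _ _ _); intros; auto.
  - left. apply globular_idm.
  - now apply glob_or_endo_comp.
  - apply glob_or_endo_hid.
  - now apply glob_or_endo_hcomp.
  - left. apply lu_glob.
  - left. apply (globular_of_section _ (lu D M) M).
    + apply lu_glob.
    + now rewrite lu_inv_cod, lu_dom.
    + apply lu_rinv.
  - left. apply ru_glob.
  - left. apply (globular_of_section _ (ru D M) M).
    + apply ru_glob.
    + now rewrite ru_inv_cod, ru_dom.
    + apply ru_rinv.
  - left. now apply asc_glob.
  - left. apply (globular_of_section _ (asc D M N K) (hcomp_ob D M (hcomp_ob D N K))).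
    + now apply asc_glob.
    + now rewrite asc_inv_cod, asc_dom.
    + now apply asc_rinv.
Defined.

Lemma globularly_generated_glob_or_endo :
  globularly_generated D -> forall Phi, glob_or_endo Phi.
Proof.
  intros HD. apply (HD glob_or_endo_sub); simpl; auto.
  intros Phi HPhi. now left.
Qed.

End GlobularOrEndo.

Theorem proposition4p4 (D : DoubleCat) (HD : globularly_generated D)
  (Phi : mor (C1 D)) (Hng : ~ globular D Phi) :
  fmor (src D) Phi = fmor (tgt D) Phi.
Proof.
  destruct (globularly_generated_glob_or_endo D HD Phi) as [Hg | Hendo].
  - contradiction.
  - exact Hendo.
Qed.
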